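(* Let $G=(V,E)$ be a finite, simple, connected reflective graph. Let $x,x'\in V$ with $d(x,x')=n-1$ for some integer $n\geq 1$, and assume the subgraph induced on $S_1(x)$ is connected. Then $S_1(x)\cap S_n(x')$ is isometric.
   Context: $d$ is the combinatorial distance, $S_n(x)=\{v:d(v,x)=n\}$. For adjacent $x\sim y$ let $V_x^y=\{v: d(v,x)<d(v,y)\}$, $V^{xy}=\{v:d(v,x)=d(v,y)\}$. A reflection from $x$ to $y$ is a graph automorphism $\phi$ with $\phi\circ\phi=\mathrm{id}$, $\phi(x)=y$, such that the edges between $V_x^y$ and $V_y^x$ are exactly $\{\{x',\phi(x')\}:x'\in V_x^y\}$ and $\phi$ fixes $V^{xy}$ pointwise. A graph is reflective if every edge admits a reflection. A set $W\subseteq V$ is isometric if for all $w,w'\in W$ there is a shortest path in $G$ from $w$ to $w'$ all of whose vertices lie in $W$. *)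

From mathcomp Require Import all_boot.
Set Implicit Arguments. Unset Strict Implicit. Unset Printing Implicit Defensive.

Definition simple_graph (T : finType) (e : rel T) : Prop :=
  symmetric e /\ irreflexive e.

Definition walkb (T : finType) (e : rel T) (n : nat) (x y : T) : bool :=
  [exists t : n.-tuple T, path e x t && (last x t == y)].

(* combinatorial distance: least n with a walk of length n
   (for connected graphs this is < #|T|; otherwise #|T| by convention) *)
Definition dist (T : finType) (e : rel T) (x y : T) : nat :=
  find (fun n => walkb e n x y) (iota 0 #|T|).

Definition graph_connected (T : finType) (e : rel T) : Prop :=
  forall x y : T, connect e x y.

Definition sphere (T : finType) (e : rel T) (n : nat) (x : T) : {set T} :=
  [set v | dist e v x == n].

Definition Vside (T : finType) (e : rel T) (x y : T) : {set T} :=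
  [set v | dist e v x < dist e v y].
Definition Vmid (T : finType) (e : rel T) (x y : T) : {set T} :=
  [set v | dist e v x == dist e v y].

Definition automorphism (T : finType) (e : rel T) (phi : T -> T) : Prop :=
  bijective phi /\ forall u v, e (phi u) (phi v) = e u v.

Definition reflection (T : finType) (e : rel T) (x y : T) (phi : T -> T) : Prop :=
  [/\ automorphism e phi /\ (forall v, phi (phi v) = v),
      phi x = y,
      (forall u, u \in Vside e x y -> phi u \in Vside e y x /\ e u (phi u)),
      (forall u v, u \in Vside e x y -> v \in Vside e y x ->
         (e u v <-> v = phi u))
    & forall v, v \in Vmid e x y -> phi v = v].

Definition reflective (T : finType) (e : rel T) : Prop :=
  forall x y, e x y -> exists phi, reflection e x y phi.

Definition isometric (T : finType) (e : rel T) (W : {set T}) : Prop :=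
  forall w w', w \in W -> w' \in W ->
    exists t : (dist e w w').-tuple T,
      [/\ path e w t, last w t = w' & all (fun v => v \in W) t].

Definition induced_connected (T : finType) (e : rel T) (W : {set T}) : Prop :=
  forall u v, u \in W -> v \in W ->
    exists p : seq T, [/\ path e u p, last u p = v & all (fun z => z \in W) p].

From mathcomp Require Import all_boot.
Set Implicit Arguments. Unset Strict Implicit. Unset Printing Implicit Defensive.

(* Vertices of W = S_1(x) ∩ S_n(x') are at distance at most 2 through x, so it
   suffices to give any w, w' in W at distance 2 a common neighbour in W.
   Reflections across edges of S_1(x) fix x, which lets one shortcut paths in
   the connected graph S_1(x): w and w' have a common neighbour z in S_1(x).
   If z is not in S_n(x'), it is closer to x' than w, and the reflection rho
   from z to w sends w' to a common neighbour rho w' of w and w' in S_1(x).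
   Folding the half V_w^z onto V_z^w along rho is non-expansive, fixes x' and
   maps rho w' to w', so rho w' is at distance n from x'. *)

Section ReflectiveGraph.

Variables (T : finType) (e : rel T).
Hypothesis e_conn : graph_connected e.
Hypothesis e_sym : symmetric e.
Hypothesis e_irr : irreflexive e.

Lemma walkb_path p s : path e p s -> walkb e (size s) p (last p s).
Proof. by move=> ps; apply/existsP; exists (in_tuple s); rewrite /= ps eqxx. Qed.

Lemma has_walkb p q : has (fun n => walkb e n p q) (iota 0 #|T|).
Proof.
have /connectP[s ps ->] := e_conn p q.
have [s' ps' uniq_s' _] := shortenP ps.
apply/hasP; exists (size s'); last exact: walkb_path.
rewrite mem_iota add0n /=.
by have := max_card (mem (p :: s')); rewrite (card_uniqP uniq_s').
Qed.

Lemma dist_ltn_card p q : dist e p q < #|T|.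
Proof. by have := has_walkb p q; rewrite has_find size_iota. Qed.

Lemma dist_path p q :
  exists s, [/\ size s = dist e p q, path e p s & last p s = q].
Proof.
have := nth_find 0 (has_walkb p q).
rewrite nth_iota ?dist_ltn_card // add0n => /existsP[t /andP[pt /eqP tq]].
by exists t; rewrite size_tuple.
Qed.

Lemma dist_path_le p s : path e p s -> dist e p (last p s) <= size s.
Proof.
move=> ps; have [s_lt|card_le] := ltnP (size s) #|T|; last first.
  exact: leq_trans (ltnW (dist_ltn_card _ _)) card_le.
rewrite leqNgt; apply/negP => /(before_find 0).
by rewrite nth_iota // add0n walkb_path.
Qed.

Lemma dist_triangle a b c : dist e a c <= dist e a b + dist e b c.
Proof.
have [s1 [<- p1 l1]] := dist_path a b; have [s2 [<- p2 l2]] := dist_path b c.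
have := @dist_path_le a (s1 ++ s2).
by rewrite cat_path p1 l1 p2 last_cat l1 l2 size_cat; apply.
Qed.

Lemma dist_xx a : dist e a a = 0.
Proof. by apply/eqP; rewrite -leqn0; apply: (@dist_path_le a [::]). Qed.

Lemma dist_eq0 a b : dist e a b = 0 -> a = b.
Proof. by move=> d0; have [[|y s] []] := dist_path a b; rewrite d0. Qed.

Lemma dist_adj_le1 a b : e a b -> dist e a b <= 1.
Proof. by move=> ab; apply: (@dist_path_le a [:: b]); rewrite /= ab. Qed.

Lemma dist_eq1 a b : (dist e a b == 1) = e a b.
Proof.
apply/eqP/idP => [d1|ab].
  have [[|y [|z s]] [size_s ps <-]] := dist_path a b; rewrite d1 // in size_s.
  by case/andP: ps.
have := dist_adj_le1 ab; rewrite leq_eqVlt ltnS leqn0 => /orP[/eqP //|/eqP].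
by move/dist_eq0=> a_b; rewrite a_b e_irr in ab.
Qed.

Lemma dist_adj a b : e a b -> dist e a b = 1.
Proof. by rewrite -dist_eq1 => /eqP. Qed.

Lemma dist_eq2 a b y : a != b -> ~~ e a b -> e a y -> e y b -> dist e a b = 2.
Proof.
move=> a_b nab ay yb.
have d_le2 : dist e a b <= 2 by apply: (@dist_path_le a [:: y; b]); rewrite /= ay yb.
have d_ne0 : dist e a b != 0 by apply: contra_neq a_b; apply: dist_eq0.
have d_ne1 : dist e a b != 1 by rewrite dist_eq1.
by move: d_le2 d_ne0 d_ne1; case: (dist e a b) => [|[|[|k]]].
Qed.

Lemma dist_sym a b : dist e a b = dist e b a.
Proof.
suff dist_sym_le c d : dist e d c <= dist e c d by apply/eqP; rewrite eqn_leq !dist_sym_le.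
have [s [<- cs <-]] := dist_path c d.
elim: s c cs => [|y s IHs] c /=; first by rewrite dist_xx.
case/andP=> cy ys; apply: leq_trans (dist_triangle _ y _) _.
by rewrite -addn1 leq_add ?IHs ?dist_adj_le1 // e_sym.
Qed.

Lemma dist_nonexpansive (g : T -> T) p q :
  (forall u v, e u v -> g u = g v \/ e (g u) (g v)) ->
  dist e (g p) (g q) <= dist e p q.
Proof.
move=> g_edge; have [s [<- ps <-]] := dist_path p q.
elim: s p ps => [|y s IHs] p /=; first by rewrite dist_xx.
case/andP=> py ys; apply: leq_trans (dist_triangle _ (g y) _) _.
rewrite addnC -addn1 leq_add ?IHs //.
by case: (g_edge _ _ py) => [->|/dist_adj_le1]; rewrite ?dist_xx.
Qed.


Lemma Vside_asym a b v : v \in Vside e a b -> v \notin Vside e b a.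
Proof. by rewrite !inE -leqNgt => /ltnW. Qed.

Lemma Vmid_of_notin_Vside a b v :
  v \notin Vside e a b -> v \notin Vside e b a -> v \in Vmid e a b.
Proof. by rewrite !inE -!leqNgt eqn_leq => -> ->. Qed.

Section Reflection.

Variables (a b : T) (phi : T -> T).
Hypothesis phi_refl : reflection e a b phi.

Lemma reflection_adj u v : e (phi u) (phi v) = e u v.
Proof. by case: phi_refl => [[[_ ->]]]. Qed.

Lemma reflectionK : involutive phi.
Proof. by case: phi_refl => [[_ phiK]]. Qed.

Lemma reflection_adj_target u : e b (phi u) = e a u.
Proof. by case: phi_refl => _ <- _ _ _; rewrite reflection_adj. Qed.

Lemma reflection_adj_mid u v : v \in Vmid e a b -> e (phi u) v = e u v.
Proof. by case: phi_refl => _ _ _ _ phi_mid /phi_mid {1}<-; rewrite reflection_adj. Qed.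

Lemma reflection_cross_edge u v :
  u \in Vside e b a -> v \notin Vside e b a -> e u v -> phi u = v \/ e (phi u) v.
Proof.
case: phi_refl => _ _ _ phi_cross _ u_ba v_ba uv.
have [v_ab|v_ab] := boolP (v \in Vside e a b).
  by left; rewrite ((phi_cross v u v_ab u_ba).1 _) ?reflectionK // e_sym.
by right; rewrite reflection_adj_mid // Vmid_of_notin_Vside.
Qed.

Definition fold_map v := if v \in Vside e b a then phi v else v.

Lemma fold_map_edge u v :
  e u v -> fold_map u = fold_map v \/ e (fold_map u) (fold_map v).
Proof.
rewrite /fold_map => uv.
case: ifPn => u_ba; case: ifPn => v_ba.
- by right; rewrite reflection_adj.
- exact: reflection_cross_edge.
- have vu : e v u by rewrite e_sym.
  by case: (reflection_cross_edge v_ba u_ba vu) => [->|vu']; [left | right; rewrite e_sym].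
- by right.
Qed.

Lemma dist_fold_map_le p q : dist e (fold_map p) (fold_map q) <= dist e p q.
Proof. exact/dist_nonexpansive/fold_map_edge. Qed.

End Reflection.

Hypothesis e_refl : reflective e.

Lemma sphere1E x v : (v \in sphere e 1 x) = e v x.
Proof. by rewrite inE dist_eq1. Qed.

Lemma reflection_shortcut x a b c d :
  e a x -> e b x -> e c x -> e a b -> e b c -> e c d -> dist e d a = dist e d b ->
  exists z, [/\ e z x, e a z & e z d].
Proof.
move=> ax bx cx ab bc cd d_ab.
have [phi phi_refl] : exists phi, reflection e b a phi by apply: e_refl; rewrite e_sym.
have x_mid : x \in Vmid e b a by rewrite inE !dist_adj // e_sym.
have d_mid : d \in Vmid e b a by rewrite inE d_ab.
exists (phi c); split.
- by rewrite (reflection_adj_mid phi_refl).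
- by rewrite (reflection_adj_target phi_refl).
- by rewrite (reflection_adj_mid phi_refl).
Qed.

Lemma nbhd_path_end x w s : e w x -> path e w s -> all (e^~ x) s ->
  [\/ last w s = w, e w (last w s) | exists z, [/\ e z x, e w z & e z (last w s)]].
Proof.
move=> wx; elim/last_ind: s => [|q c IHq]; first by move=> _ _; apply: Or31.
rewrite rcons_path all_rcons last_rcons => /andP[wq vc] /andP[cx qx].
set v := last w q in vc IHq.
have vx : e v x by have := mem_last w q; rewrite -/v inE => /predU1P[->|/(allP qx)].
have [->|c_w] := eqVneq c w; first by apply: Or31.
have [wc|nwc] := boolP (e w c); first by apply: Or32.
apply: Or33; have [v_w|wv|[z [zx wz zv]]] := IHq wq qx.
- by move: vc; rewrite v_w (negbTE nwc).
- by exists v.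
have [zc|nzc] := boolP (e z c); first by exists z.
have [c_z|c_nz] := eqVneq c z; first by move: wz; rewrite -c_z (negbTE nwc).
apply: (@reflection_shortcut x w z v c) => //.
by rewrite (@dist_eq2 c w x) ?(@dist_eq2 c z v) // e_sym.
Qed.

Lemma nbhd_common_neighbour x w w' :
  induced_connected e (sphere e 1 x) -> e w x -> e w' x -> dist e w w' = 2 ->
  exists z, [/\ e z x, e w z & e z w'].
Proof.
move=> conn1 wx w'x.
have := conn1 w w'; rewrite !sphere1E => /(_ wx w'x)[s [ws <- s1]].
have s_x : all (e^~ x) s by apply: sub_all s1 => v; rewrite sphere1E.
move=> ww'2; have [l_w|wl|//] := nbhd_path_end wx ws s_x.
- by rewrite l_w dist_xx in ww'2.
- by rewrite dist_adj in ww'2.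
Qed.

Lemma reflected_common_neighbour x x' w w' z :
  e w x -> e w' x -> e z x -> e w z -> e z w' -> dist e w w' = 2 ->
  dist e z x' < dist e w x' ->
  exists y, [/\ e y x, e w y, e y w' & dist e w' x' <= dist e y x'].
Proof.
move=> wx w'x zx wz zw' ww'2 zx'_lt.
have [rho rho_refl] : exists rho, reflection e z w rho by apply: e_refl; rewrite e_sym.
have x_mid : x \in Vmid e z w by rewrite inE !dist_adj // e_sym.
have x'_side : x' \in Vside e z w by rewrite inE dist_sym (dist_sym x' w).
have w'_side : w' \in Vside e z w.
  by rewrite inE dist_sym (dist_adj zw') (dist_sym w' w) ww'2.
have [_ _ /(_ w' w'_side)[y_side w'y] _ _] := rho_refl.
exists (rho w'); split.
- by rewrite (reflection_adj_mid rho_refl).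
- by rewrite (reflection_adj_target rho_refl).
- by rewrite e_sym.
- have := dist_fold_map_le rho_refl (rho w') x'.
  by rewrite /fold_map y_side (reflectionK rho_refl) (negbTE (Vside_asym x'_side)).
Qed.

Lemma sphere1_diam2 x : {in sphere e 1 x &, forall w w', dist e w w' <= 2}.
Proof.
move=> w w'; rewrite !sphere1E => wx w'x.
by apply: leq_trans (dist_triangle w x w') _; rewrite dist_adj // dist_sym dist_adj.
Qed.

Lemma isometric_of_diam2 (W : {set T}) :
  {in W &, forall w w', dist e w w' <= 2} ->
  {in W &, forall w w', dist e w w' = 2 -> exists2 z, z \in W & e w z && e z w'} ->
  isometric e W.
Proof.
move=> W_diam2 W_mid w w' wW w'W.
suff [s [size_s ws sw' sW]] : exists s, [/\ size s = dist e w w', path e w s,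
    last w s = w' & all (fun v => v \in W) s].
  by exists (Tuple (introT eqP size_s)).
have := W_diam2 w w' wW w'W.
case ww': (dist e w w') => [|[|[|//]]] _.
- by exists [::]; rewrite (dist_eq0 ww').
- by exists [:: w']; rewrite /= w'W -dist_eq1 ww'.
- have [z zW /andP[wz zw']] := W_mid w w' wW w'W ww'.
  by exists [:: z; w']; rewrite /= wz zw' zW w'W.
Qed.

Lemma sphere_meet_common_neighbour x x' n (W := sphere e 1 x :&: sphere e n x') :
  induced_connected e (sphere e 1 x) -> 0 < n -> dist e x x' = n.-1 ->
  {in W &, forall w w', dist e w w' = 2 -> exists2 z, z \in W & e w z && e z w'}.
Proof.
move=> conn1 n_gt0 xx' w w'.
have WE v : (v \in W) = e v x && (dist e v x' == n) by rewrite !inE dist_eq1.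
have dist_le_n v : e v x -> dist e v x' <= n.
  move=> vx; rewrite -(prednK n_gt0) -xx' -add1n -(dist_adj vx).
  exact: dist_triangle.
rewrite !WE => /andP[wx /eqP wn] /andP[w'x /eqP w'n] ww'2.
have [z [zx wz zw']] := nbhd_common_neighbour conn1 wx w'x ww'2.
have [zn|zn] := eqVneq (dist e z x') n; first by exists z; rewrite ?WE ?zx ?zn ?eqxx ?wz ?zw'.
have zx'_lt : dist e z x' < dist e w x' by rewrite wn ltn_neqAle zn dist_le_n.
have [y [yx wy yw' w'y]] := reflected_common_neighbour wx w'x zx wz zw' ww'2 zx'_lt.
by exists y; rewrite ?WE ?yx ?wy ?yw' // eqn_leq dist_le_n // -{1}w'n.
Qed.

End ReflectiveGraph.

Theorem lemma2p11 (T : finType) (e : rel T) (x x' : T) (n : nat) :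
  simple_graph e -> graph_connected e -> reflective e ->
  1 <= n -> dist e x x' = n.-1 ->
  induced_connected e (sphere e 1 x) ->
  isometric e (sphere e 1 x :&: sphere e n x').
Proof.
move=> [e_sym e_irr] e_conn e_refl n_gt0 xx' conn1.
apply: isometric_of_diam2 => //.
- by move=> w w' /setIP[w1 _] /setIP[w'1 _]; apply: sphere1_diam2 w1 w'1.
- exact: sphere_meet_common_neighbour.
Qed.
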